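(* Let $n\ge0$, $\alpha,\beta\in D_n$ and $1\le k\le 2n+1$. Then $\alpha\preccurlyeq\beta$ if and only if $l_k(\alpha)\preccurlyeq l_k(\beta)$.
   Context: $D_n$ is the set of non-crossing perfect matchings of $\{1,\ldots,2n\}$ (non-crossing $n$-chord diagrams), $D_0=\{\phi\}$. For $1\le k\le 2n+1$, $l_k:D_n\to D_{n+1}$: $l_k(\alpha)$ matches $k$ with $k+1$, and each old point $i$ becomes $i$ if $i<k$ and $i+2$ if $i\ge k$, old pairs kept. Restricted sequence of $\alpha\in D_n$ ($n\ge1$): let $k_n$ be the smallest $k$ with $k$ matched to $k+1$ and let $\alpha'$ be $\alpha$ with that arc removed (renumbered); the restricted sequence is $(k_n,k_{n-1},\ldots,k_1)$ where $(k_{n-1},\ldots,k_1)$ is the restricted sequence of $\alpha'$ (empty for $\phi$). Partial order: $\alpha\preccurlyeq\beta$ iff, writing $(a_n,\ldots,a_1)$ and $(b_n,\ldots,b_1)$ for their restricted sequences, $a_i\le b_i$ for all $1\le i\le n$. *)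

From mathcomp Require Import all_boot.
Set Implicit Arguments. Unset Strict Implicit. Unset Printing Implicit Defensive.

(* A perfect matching of {1,...,2n} is encoded by a sequence [p] of length 2n:
   the partner of point i (1 <= i <= 2n) is the (i-1)-th entry of p. *)
Definition partner (p : seq nat) (i : nat) : nat := nth 0 p i.-1.

Definition is_NCM (n : nat) (p : seq nat) : Prop :=
  size p = 2 * n /\
  (forall i, 1 <= i <= 2 * n ->
     [/\ 1 <= partner p i <= 2 * n, partner p i != i & partner p (partner p i) = i]) /\
  (forall a b, 1 <= a -> a < b -> b < partner p a -> partner p a < partner p b ->
     partner p b <= 2 * n -> False).

Definition shift_up (k i : nat) : nat := if i < k then i else i.+2.

Definition l_ins (k : nat) (p : seq nat) : seq nat :=
  mkseq (fun j0 =>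
           let j := j0.+1 in
           if j == k then k.+1
           else if j == k.+1 then k
           else let i := (if j < k then j else j - 2) in
                shift_up k (partner p i))
        (size p).+2.

Definition shift_down (k i : nat) : nat := if i < k then i else i - 2.

Definition remove_arc (k : nat) (p : seq nat) : seq nat :=
  mkseq (fun j0 =>
           let j := j0.+1 in
           let i := (if j < k then j else j.+2) in
           shift_down k (partner p i))
        (size p - 2).

Definition first_short_arc (p : seq nat) : nat :=
  let s := iota 1 (size p) in
  nth 0 s (find (fun k => partner p k == k.+1) s).

Fixpoint restr_aux (m : nat) (p : seq nat) : seq nat :=
  match m with
  | 0 => [::]
  | m'.+1 => let k := first_short_arc p in k :: restr_aux m' (remove_arc k p)
  end.

(* restricted sequence (k_n, k_(n-1), ..., k_1) of a matching in D_n,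
   stored as a list with head k_n *)
Definition restricted_seq (p : seq nat) : seq nat := restr_aux (size p %/ 2) p.

(* a_i, 1 <= i <= n, of the restricted sequence (a_n, ..., a_1) *)
Definition rs_entry (p : seq nat) (i : nat) : nat :=
  nth 0 (restricted_seq p) (size p %/ 2 - i).

Definition prec (a b : seq nat) : Prop :=
  forall i, 1 <= i <= size a %/ 2 -> rs_entry a i <= rs_entry b i.

Example ex1 : restricted_seq [:: 4; 3; 2; 1; 6; 5] = [:: 2; 1; 1]. Proof. by []. Qed.
Example ex2 : l_ins 2 [:: 2; 1] = [:: 4; 3; 2; 1]. Proof. by []. Qed.
Example ex3 : remove_arc 2 [:: 4; 3; 2; 1] = [:: 2; 1]. Proof. by []. Qed.

From mathcomp Require Import all_boot zify.
Set Implicit Arguments. Unset Strict Implicit.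

(* The restricted sequence of l_k(alpha) is obtained from that of alpha by a
   purely combinatorial insertion [rs_ins k]: if the first short arc a of alpha
   satisfies a + 2 <= k, it is still the first short arc of l_k(alpha), and
   removing it leaves l_(k-2) of the reduced diagram; otherwise {k, k+1} is the
   first short arc of l_k(alpha), and removing it gives back alpha.
   Successive entries of a restricted sequence satisfy k_(i+1) <= k_i + 1, as a
   short arc of the reduced diagram starting left of a - 1 would already be a
   short arc of alpha before a.  For sequences with this property, inserting k
   on both sides preserves and reflects the componentwise order. *)

Ltac shift_lia := rewrite /shift_up /shift_down; repeat case: ifP; lia.

Lemma find_eq_first (T : Type) (P : pred T) x0 (s : seq T) i :
  i < size s -> P (nth x0 s i) -> (forall j, j < i -> ~~ P (nth x0 s j)) ->
  find P s = i.
Proof.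
move=> lt_i_s Pi before_i; apply/eqP; rewrite eqn_leq; apply/andP; split.
- by rewrite leqNgt; apply/negP => /(before_find x0); rewrite Pi.
- rewrite leqNgt; apply/negP => /before_i; rewrite nth_find //.
  by apply/(has_nthP x0); exists i.
Qed.

Lemma all2_nthP (T : Type) (r : rel T) x0 (s t : seq T) : size s = size t ->
  reflect (forall j, j < size s -> r (nth x0 s j) (nth x0 t j)) (all2 r s t).
Proof.
elim: s t => [|x s IH] [|y t] //=; first by left.
case=> size_st; apply: (iffP andP) => [[rxy /(IH _ size_st) rst] [|j] //=|r_st].
  exact: rst.
by split; [exact: (r_st 0) | apply/(IH _ size_st) => j /(r_st j.+1)].
Qed.

Lemma size_l_ins k p : size (l_ins k p) = (size p).+2.
Proof. by rewrite size_mkseq. Qed.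

Lemma size_remove_arc k p : size (remove_arc k p) = size p - 2.
Proof. by rewrite size_mkseq. Qed.

Lemma partner_l_ins k p j : 1 <= j <= (size p).+2 ->
  partner (l_ins k p) j = if j == k then k.+1 else if j == k.+1 then k
     else shift_up k (partner p (shift_down k j)).
Proof.
move=> j_in; rewrite /partner /l_ins nth_mkseq /=; last lia.
by have -> : j.-1.+1 = j by lia.
Qed.

Lemma partner_remove_arc k p j : 1 <= j <= size p - 2 ->
  partner (remove_arc k p) j = shift_down k (partner p (shift_up k j)).
Proof.
move=> j_in; rewrite /partner /remove_arc nth_mkseq /=; last lia.
by have -> : j.-1.+1 = j by lia.
Qed.

Lemma eq_from_partner p q : size p = size q ->
  (forall j, 1 <= j <= size p -> partner p j = partner q j) -> p = q.
Proof.
move=> size_pq eq_pq; apply: (eq_from_nth (x0 := 0)) => // i lt_i_p.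
by have := eq_pq i.+1; apply; lia.
Qed.

Lemma l_insK k : cancel (l_ins k) (remove_arc k).
Proof.
move=> p; apply: eq_from_partner => [|j]; rewrite size_remove_arc size_l_ins; first lia.
move=> j_in; rewrite partner_remove_arc ?size_l_ins; last lia.
rewrite partner_l_ins; last shift_lia.
have -> : (shift_up k j == k) = false by shift_lia.
have -> : (shift_up k j == k.+1) = false by shift_lia.
have -> : shift_down k (shift_up k j) = j by shift_lia.
by move: (partner p j) => x; shift_lia.
Qed.

Lemma first_short_arc_eq p f : 1 <= f < size p -> partner p f = f.+1 ->
  (forall j, 1 <= j < f -> partner p j != j.+1) -> first_short_arc p = f.
Proof.
move=> f_in short_f no_short_before; rewrite /first_short_arc.
rewrite (@find_eq_first _ _ 0 _ f.-1) ?nth_iota ?size_iota; try lia.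
- have -> : 1 + f.-1 = f by lia.
  by rewrite short_f.
- by move=> j lt_j_f; rewrite nth_iota; [apply: no_short_before|]; lia.
Qed.

Section NoncrossingMatching.

Variables (n : nat) (p : seq nat).
Hypothesis p_NCM : is_NCM n p.

Lemma NCM_short_arc_within a : 1 <= a <= 2 * n -> a < partner p a ->
  exists2 f, a <= f < partner p a & partner p f = f.+1.
Proof.
(* The arc starting at a + 1 is nested in (a, partner a) by non-crossing. *)
have [_ [p_inv p_nc]] := p_NCM.
move: {2}(partner p a - a) (leqnn (partner p a - a)) => d.
elim: d a => [|d IH] a le_pa_d a_in a_pa; first lia.
have [pa_in _ pp_a] := p_inv a a_in.
have [/eqP short_a | long_a] := eqVneq (partner p a) a.+1; first by exists a; lia.
have [c_in c_a1 pp_a1] := p_inv a.+1 ltac:(lia).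
set c := partner p a.+1 in c_in c_a1 pp_a1.
have [lt_c_a1 | lt_a1_c | c_eq] := ltngtP c a.+1; last by rewrite c_eq eqxx in c_a1.
- have [ca | c_a] := eqVneq c a; first by move: pp_a1; rewrite ca; lia.
  by exfalso; apply: (p_nc c a); rewrite ?pp_a1; lia.
- have [lt_c_pa | lt_pa_c | c_pa] := ltngtP c (partner p a).
  + have [f f_in short_f] := IH a.+1 ltac:(lia) ltac:(lia) ltac:(lia).
    by exists f => //; lia.
  + by exfalso; apply: (p_nc a a.+1); lia.
  + by move: pp_a1; rewrite c_pa pp_a; lia.
Qed.

Lemma NCM_first_short_arcP : 0 < n ->
  [/\ 1 <= first_short_arc p, first_short_arc p < 2 * n,
      partner p (first_short_arc p) = (first_short_arc p).+1 &
      forall j, 1 <= j < first_short_arc p -> partner p j != j.+1].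
Proof.
move=> n_gt0; have [size_p [p_inv _]] := p_NCM.
have [p1_in p1_1 _] := p_inv 1 ltac:(lia).
have [f f_in short_f] := NCM_short_arc_within (a := 1) ltac:(lia) ltac:(lia).
have has_short : exists f, [&& 1 <= f, f < 2 * n & partner p f == f.+1].
  by exists f; rewrite short_f eqxx; lia.
have [m /and3P[m_ge1 m_lt /eqP short_m] min_m] := ex_minnP has_short.
have no_short_before j : 1 <= j < m -> partner p j != j.+1.
  by move=> j_in; apply/eqP => short_j; have := min_m j; rewrite short_j eqxx; lia.
by rewrite (@first_short_arc_eq p m) //; lia.
Qed.

Lemma NCM_partner_off_arc f i : 1 <= f < 2 * n -> partner p f = f.+1 ->
  1 <= i <= 2 * n -> i != f -> i != f.+1 ->
  [/\ 1 <= partner p i <= 2 * n, partner p i != f, partner p i != f.+1 &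
      partner p (partner p i) = i].
Proof.
have [_ [p_inv _]] := p_NCM.
move=> f_in short_f i_in i_f i_f1.
have [pi_in _ pp_i] := p_inv i i_in.
have [_ _ pp_f] := p_inv f ltac:(lia).
split => //; apply/eqP => pi_f.
- by move: pp_i; rewrite pi_f short_f; lia.
- by move: pp_i pp_f; rewrite pi_f short_f => ->; lia.
Qed.

End NoncrossingMatching.

Lemma shift_up_crossing f a b xa xb m :
  xa != f -> xa != f.+1 -> xb != f -> xb != f.+1 ->
  1 <= a -> a < b -> b < shift_down f xa -> shift_down f xa < shift_down f xb ->
  shift_down f xb <= m ->
  [/\ 1 <= shift_up f a, shift_up f a < shift_up f b, shift_up f b < xa, xa < xb
     & xb <= m + 2].
Proof. rewrite /shift_up /shift_down; repeat case: ifP; move=> *; split; lia. Qed.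

Lemma NCM_remove_arc n p f : is_NCM n.+1 p -> 1 <= f < 2 * n.+1 ->
  partner p f = f.+1 -> is_NCM n (remove_arc f p).
Proof.
move=> p_NCM f_in short_f; have [size_p [p_inv p_nc]] := p_NCM.
have size_r : size (remove_arc f p) = 2 * n by rewrite size_remove_arc; lia.
have partner_r j : 1 <= j <= 2 * n ->
    partner (remove_arc f p) j = shift_down f (partner p (shift_up f j)).
  by move=> j_in; apply: partner_remove_arc; lia.
have off_arc j : 1 <= j <= 2 * n -> _ :=
  fun j_in => NCM_partner_off_arc (i := shift_up f j) p_NCM f_in short_f
                ltac:(shift_lia) ltac:(shift_lia) ltac:(shift_lia).
split => //; split.
- move=> i i_in; rewrite partner_r //.
  have [x_in x_f x_f1 pp_i] := off_arc i i_in.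
  have [_ x_i _] := p_inv (shift_up f i) ltac:(shift_lia).
  move: x_in x_f x_f1 pp_i x_i; set x := partner p (shift_up f i).
  clearbody x => x_in x_f x_f1 pp_i x_i.
  split; [shift_lia | move: x_i; shift_lia | rewrite partner_r; last shift_lia].
  have -> : shift_up f (shift_down f x) = x by shift_lia.
  by rewrite pp_i; shift_lia.
- move=> a b a_ge1 lt_ab lt_b_pa lt_pa_pb pb_le.
  have a_in : 1 <= a <= 2 * n by lia.
  have b_in : 1 <= b <= 2 * n by lia.
  rewrite !partner_r // in lt_b_pa lt_pa_pb pb_le.
  have [_ xa_f xa_f1 _] := off_arc a a_in.
  have [_ xb_f xb_f1 _] := off_arc b b_in.
  have := shift_up_crossing xa_f xa_f1 xb_f xb_f1 a_ge1 lt_ab lt_b_pa lt_pa_pb pb_le.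
  by case=> *; apply: (p_nc (shift_up f a) (shift_up f b)); lia.
Qed.

Lemma restricted_seqE n p : size p = 2 * n -> restricted_seq p = restr_aux n p.
Proof. by move=> size_p; rewrite /restricted_seq size_p mulKn. Qed.

Lemma size_restr_aux m p : size (restr_aux m p) = m.
Proof. by elim: m p => [|m IH] p //=; rewrite IH. Qed.

Lemma restricted_seq_cons n p : size p = 2 * n.+1 ->
  restricted_seq p =
    first_short_arc p :: restricted_seq (remove_arc (first_short_arc p) p).
Proof.
move=> size_p; rewrite (restricted_seqE size_p) /= (@restricted_seqE n) //.
by rewrite size_remove_arc size_p; lia.
Qed.

Lemma shift_down_up_comm a k x : a.+2 <= k -> x != a -> x != a.+1 ->
  shift_down a (shift_up k x) = shift_up (k - 2) (shift_down a x).
Proof. by shift_lia. Qed.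

Section InsertArc.

Variables (n : nat) (p : seq nat).
Hypothesis p_NCM : is_NCM n.+1 p.

Lemma remove_arc_l_ins f k : 1 <= f < 2 * n.+1 -> partner p f = f.+1 ->
  f.+2 <= k <= 2 * n.+1 + 1 ->
  remove_arc f (l_ins k p) = l_ins (k - 2) (remove_arc f p).
Proof.
move=> f_in short_f k_in; have [size_p _] := p_NCM.
apply: eq_from_partner => [|j]; rewrite !(size_remove_arc, size_l_ins) size_p; first lia.
move=> j_in; rewrite partner_remove_arc ?size_l_ins ?size_p; last lia.
rewrite (@partner_l_ins (k - 2)) ?size_remove_arc ?size_p; last lia.
rewrite (@partner_l_ins k) ?size_p; last shift_lia.
have [-> | j_k2] := eqVneq j (k - 2).
  have -> : shift_up f (k - 2) = k by shift_lia.
  by rewrite eqxx; shift_lia.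
have [-> | j_k1] := eqVneq j (k - 2).+1.
  have -> : shift_up f (k - 2).+1 = k.+1 by shift_lia.
  by rewrite eqxx ifN_eq; [shift_lia | lia].
have -> : (shift_up f j == k) = false by shift_lia.
have -> : (shift_up f j == k.+1) = false by shift_lia.
rewrite partner_remove_arc ?size_p; last shift_lia.
have -> : shift_down k (shift_up f j) = shift_up f (shift_down (k - 2) j) by shift_lia.
have [_ x_f x_f1 _] := NCM_partner_off_arc (i := shift_up f (shift_down (k - 2) j))
  p_NCM f_in short_f ltac:(shift_lia) ltac:(shift_lia) ltac:(shift_lia).
by apply: shift_down_up_comm => //; lia.
Qed.

Lemma first_short_arc_l_ins_small k : 1 <= k <= (first_short_arc p).+1 ->
  first_short_arc (l_ins k p) = k.
Proof.
have [size_p _] := p_NCM.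
have [a_ge1 a_lt short_a no_short_before] := NCM_first_short_arcP p_NCM (ltn0Sn n).
move=> k_in; apply: first_short_arc_eq; rewrite ?size_l_ins ?size_p; first lia.
  by rewrite partner_l_ins ?eqxx //; lia.
move=> j j_in; rewrite partner_l_ins ?size_p; last lia.
have -> : shift_down k j = j by shift_lia.
have [j_a | j_lt_a] := eqVneq j (first_short_arc p).
  by rewrite j_a short_a; shift_lia.
by move: (no_short_before j ltac:(lia)); move: (partner p j) => x; shift_lia.
Qed.

Lemma first_short_arc_l_ins_large k : (first_short_arc p).+2 <= k ->
  first_short_arc (l_ins k p) = first_short_arc p.
Proof.
have [size_p _] := p_NCM.
have [a_ge1 a_lt short_a no_short_before] := NCM_first_short_arcP p_NCM (ltn0Sn n).
move=> k_large; apply: first_short_arc_eq; rewrite ?size_l_ins ?size_p; first lia.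
  rewrite partner_l_ins ?size_p; last lia.
  have -> : shift_down k (first_short_arc p) = first_short_arc p by shift_lia.
  by rewrite short_a; shift_lia.
move=> j j_in; rewrite partner_l_ins ?size_p; last lia.
have -> : shift_down k j = j by shift_lia.
by move: (no_short_before j j_in); move: (partner p j) => x; shift_lia.
Qed.

End InsertArc.

Fixpoint rs_ins (k : nat) (s : seq nat) : seq nat :=
  match s with
  | [::] => [:: k]
  | a :: s' => if a.+2 <= k then a :: rs_ins (k - 2) s' else k :: s
  end.

Lemma restricted_seq_l_ins n p k : is_NCM n p -> 1 <= k <= 2 * n + 1 ->
  restricted_seq (l_ins k p) = rs_ins k (restricted_seq p).
Proof.
elim: n p k => [|n IH] p k p_NCM k_in; have [size_p _] := p_NCM.
  by case: p size_p p_NCM => // _ _; have -> : k = 1 by lia.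
have [a_ge1 a_lt short_a _] := NCM_first_short_arcP p_NCM (ltn0Sn n).
have size_lp : size (l_ins k p) = 2 * n.+2 by rewrite size_l_ins size_p; lia.
rewrite (restricted_seq_cons size_lp) (restricted_seq_cons size_p) /=.
case: ifP => [a_k | k_a].
- rewrite (first_short_arc_l_ins_large p_NCM) // (remove_arc_l_ins p_NCM) //; try lia.
  by rewrite (IH _ _ (NCM_remove_arc p_NCM _ short_a)) //; lia.
- rewrite (first_short_arc_l_ins_small p_NCM) ?l_insK; last lia.
  by rewrite -(restricted_seq_cons size_p).
Qed.

Lemma first_short_arc_remove_arc n p : is_NCM n.+2 p ->
  first_short_arc p <= (first_short_arc (remove_arc (first_short_arc p) p)).+1.
Proof.
move=> p_NCM; have [size_p _] := p_NCM.
have [a_ge1 a_lt short_a no_short_before] := NCM_first_short_arcP p_NCM (ltn0Sn _).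
set a := first_short_arc p in a_ge1 a_lt short_a no_short_before *.
have r_NCM := @NCM_remove_arc n.+1 p a p_NCM ltac:(lia) short_a.
have [b_ge1 b_lt short_b _] := NCM_first_short_arcP r_NCM (ltn0Sn _).
set b := first_short_arc _ in b_ge1 b_lt short_b *.
rewrite leqNgt; apply/negP => lt_b_a.
move: short_b; rewrite partner_remove_arc ?size_p; last lia.
have -> : shift_up a b = b by shift_lia.
have [_ x_a x_a1 _] := NCM_partner_off_arc (f := a) (i := b) p_NCM ltac:(lia) short_a
  ltac:(lia) ltac:(lia) ltac:(lia).
have := no_short_before b ltac:(lia).
by move: x_a x_a1; move: (partner p b) => x; shift_lia.
Qed.

Definition rs_step (x y : nat) : bool := x <= y.+1.

Lemma restricted_seq_sorted n p : is_NCM n p -> sorted rs_step (restricted_seq p).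
Proof.
elim: n p => [|n IH] p p_NCM; have [size_p _] := p_NCM.
  by rewrite (restricted_seqE size_p).
have [a_ge1 a_lt short_a _] := NCM_first_short_arcP p_NCM (ltn0Sn n).
have r_NCM := NCM_remove_arc (f := first_short_arc p) p_NCM ltac:(lia) short_a.
have := IH _ r_NCM; rewrite (restricted_seq_cons size_p) /=.
case: n {IH a_lt size_p} p_NCM r_NCM => [|n] p_NCM r_NCM.
  by have [size_r _] := r_NCM; rewrite (restricted_seqE size_r).
have [size_r _] := r_NCM; rewrite (restricted_seq_cons size_r) /= => ->.
by rewrite andbT; apply: first_short_arc_remove_arc p_NCM.
Qed.

Lemma all2_leq_rs_ins_lt m b s t : size s = size t -> path rs_step b t -> m < b ->
  all2 leq (rs_ins m s) (b :: t) = all2 leq s t.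
Proof.
elim: s t m b => [|a s IH] [|c t] m b //=; first by move=> _ _ /ltnW ->.
case=> size_st /andP[b_c path_t] lt_m_b; rewrite /rs_step in b_c.
case: ifP => a_m /=; last by rewrite ltnW.
rewrite IH //; last lia.
have -> : a <= b by lia.
by have -> : a <= c by lia.
Qed.

Lemma all2_leq_rs_ins k s t : size s = size t -> sorted rs_step t ->
  all2 leq (rs_ins k s) (rs_ins k t) = all2 leq s t.
Proof.
elim: s t k => [|a s IH] [|b t] k //=; first by rewrite leqnn.
case=> size_st path_t; have sorted_t := path_sorted path_t.
case: ifP => a_k; case: ifP => b_k /=.
- by rewrite IH.
- rewrite all2_leq_rs_ins_lt //; last lia.
  have -> : a <= k by lia.
  by have -> : a <= b by lia.
- have -> : k <= b = false by lia.
  by have -> : a <= b = false by lia.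
- by rewrite leqnn.
Qed.

Lemma prec_all2_leq n a b : size a = 2 * n -> size b = 2 * n ->
  prec a b <-> all2 leq (restricted_seq a) (restricted_seq b).
Proof.
move=> size_a size_b; rewrite /prec /rs_entry size_a size_b mulKn //.
rewrite (restricted_seqE size_a) (restricted_seqE size_b).
have size_ab : size (restr_aux n a) = size (restr_aux n b) by rewrite !size_restr_aux.
rewrite -(rwP (all2_nthP _ 0 size_ab)) size_restr_aux.
split=> [le_ab j lt_j_n | le_ab i i_in]; last by apply: le_ab; lia.
by have := le_ab (n - j) ltac:(lia); have -> : n - (n - j) = j by lia.
Qed.

Theorem mainTheorem9 (n : nat) (alpha beta : seq nat) (k : nat) :
  is_NCM n alpha -> is_NCM n beta -> 1 <= k <= 2 * n + 1 ->
  (prec alpha beta <-> prec (l_ins k alpha) (l_ins k beta)).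
Proof.
move=> alpha_NCM beta_NCM k_in.
have [size_a _] := alpha_NCM; have [size_b _] := beta_NCM.
have size_l q : size q = 2 * n -> size (l_ins k q) = 2 * n.+1.
  by move=> size_q; rewrite size_l_ins size_q; lia.
rewrite (prec_all2_leq size_a size_b).
rewrite (prec_all2_leq (size_l _ size_a) (size_l _ size_b)).
rewrite (restricted_seq_l_ins alpha_NCM k_in) (restricted_seq_l_ins beta_NCM k_in).
rewrite all2_leq_rs_ins //.
- by rewrite (restricted_seqE size_a) (restricted_seqE size_b) !size_restr_aux.
- exact: restricted_seq_sorted beta_NCM.
Qed.
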